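(* Let $N\ge1$, fix a time $t_k$, and let $\mu_i(t_k)\in\mathbb{R}$, $\sigma_i(t_k)>0$ for $i\in\{1,\dots,N\}$, $\sigma_{\min}^2(t_k)=\min_i\sigma_i^2(t_k)$ and $\gamma(t_k)\in[0,1)$. Let $C(t_k),A_1(t_k),\dots,A_N(t_k)$ be independent with $C(t_k)\sim\mathcal{N}(0,\sigma_{\min}^2(t_k)|\gamma(t_k)|)$ and $A_i(t_k)\sim\mathcal{N}(\mu_i(t_k),\sigma_i^2(t_k)-\sigma_{\min}^2(t_k)|\gamma(t_k)|)$, set $\widetilde q_i(t_k)=C(t_k)+A_i(t_k)$ and $\widetilde M(t_k)=\max(0,\widetilde q_1(t_k),\dots,\widetilde q_N(t_k))$. Then for every $i\in\{1,\dots,N\}$, $$\mathbb{P}\bigl[\widetilde M(t_k)=\widetilde q_i(t_k)\bigr]=\int_{\mathbb{R}} f_{A_i(t_k)}(x)\,F_{C(t_k)}(x)\prod_{j=1,\,j\neq i}^N F_{A_j(t_k)}(x)\,dx,$$ where $f_{A_i(t_k)}$ is the density of $A_i(t_k)$ and $F_{C(t_k)}$, $F_{A_j(t_k)}$ are the cumulative distribution functions of $C(t_k)$ and $A_j(t_k)$.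
   Context: $(\widetilde q_1(t_k),\dots,\widetilde q_N(t_k))$ is the common factor approximation and $\widetilde M(t_k)$ the common factor maximum; if $\gamma(t_k)=0$ then $C(t_k)$ is the constant $0$ and $F_{C(t_k)}(x)=\mathbf{1}_{\{x\ge0\}}$. *)

From HB Require Import structures.
From mathcomp Require Import all_boot all_order all_algebra.
From mathcomp Require Import all_classical all_reals all_analysis.
Set Implicit Arguments. Unset Strict Implicit. Unset Printing Implicit Defensive.
Import Order.TTheory GRing.Theory Num.Theory.
Import numFieldNormedType.Exports.
Local Open Scope classical_set_scope.
Local Open Scope ring_scope.

Definition mutually_independent d (T : measurableType d) (R : realType)
    (P : probability T R) (I : finType) (X : I -> {RV P >-> R}) : Prop :=
  forall (J : {set I}) (B : I -> set R), (forall j, measurable (B j)) ->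
    P (\bigcap_(j in [set` J]) (X j @^-1` B j)) =
    (\prod_(j in J) P (X j @^-1` B j))%E.

Definition CA_family d (T : measurableType d) (R : realType) (P : probability T R)
    (N : nat) (C : {RV P >-> R}) (A : 'I_N -> {RV P >-> R}) :
    option 'I_N -> {RV P >-> R} :=
  fun o => match o with None => C | Some i => A i end.

(* Gaussian law N(m, v) with variance v >= 0; for v = 0 it is the Dirac mass
   at m (degenerate normal, i.e. the constant m). *)
Definition gauss_law (R : realType) (m v : R) (B : set R) : \bar R :=
  if v == 0 then \d_m B else normal_prob m (Num.sqrt v) B.

Definition sigma_min2 (R : realType) (N : nat) (hN : (0 < N)%N) (sigma : 'I_N -> R) : R :=
  \big[Num.min/(sigma (Ordinal hN)) ^+ 2]_(i < N) (sigma i) ^+ 2.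

From HB Require Import structures.
From mathcomp Require Import all_boot all_order all_algebra.
From mathcomp Require Import all_classical all_reals all_analysis.
From mathcomp Require Import ring lra zify.
From mathcomp Require Import measurable_realfun.
Import Order.TTheory GRing.Theory Num.Theory.
Import numFieldNormedType.Exports.
Local Open Scope classical_set_scope.
Local Open Scope ring_scope.
Set Implicit Arguments. Unset Strict Implicit. Unset Printing Implicit Defensive.

(* On the event {max = q_i} = {-C <= A_i} /\ {A_j <= A_i for all j}, locate A_i
   in a cell [a, a + h[ of a grid of mesh h.  Given A_i in the cell, the event is
   squeezed between the boxes {C >= -a, A_j <= a (j <> i)} and {C >= -a - h,
   A_j <= a + h (j <> i)}, whose probabilities factor by independence into
   P(A_i in cell) g(a) and P(A_i in cell) g(a + h), with g = F_C prod_(j <> i) F_(A_j)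
   (C is centred Gaussian, so P(C >= -t) = F_C(t)).  The integral of f_(A_i) g over
   the cell obeys the same bounds, and the gaps add up to at most h sup f_(A_i),
   because the increments of the nondecreasing g, with values in [0, 1], over
   disjoint cells add up to at most 1.  Letting h -> 0 gives the formula, with no
   need for product measures or conditional densities. *)

Definition int_of_nat (k : nat) : int :=
  if odd k then - (k./2).+1%:Z else (k./2)%:Z.

Lemma int_of_nat_inj : injective int_of_nat.
Proof.
move=> k l; rewrite /int_of_nat.
have kE := odd_double_half k; have lE := odd_double_half l.
case: (odd k) kE; case: (odd l) lE => /= lE kE.
- by move/eqP; rewrite eqr_opp => /eqP [e]; rewrite -kE -lE e.
- by move=> e; have := oppr_lt0 (k./2).+1%:Z; rewrite e ltNge.
- by move=> e; have := oppr_lt0 (l./2).+1%:Z; rewrite -e ltNge.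
- by move=> [e]; rewrite -kE -lE e.
Qed.

Lemma int_of_nat_surj (m : int) : exists k, int_of_nat k = m.
Proof.
case: m => n; first by exists n.*2; rewrite /int_of_nat odd_double doubleK.
by exists n.*2.+1; rewrite /int_of_nat /= odd_double /= uphalf_double NegzE.
Qed.

Section Grid.
Variable R : realType.
Implicit Types (h : R) (k : nat).

Definition grid_point h k : R := (int_of_nat k)%:~R * h.

Definition grid_cell h k : set R := [set x | Num.floor (x / h) = int_of_nat k].

Lemma grid_cellE h k : 0 < h ->
  grid_cell h k = `[grid_point h k, grid_point h k + h[%classic.
Proof.
move=> h0; apply/seteqP; split => x /=; rewrite in_itv /=.
  move/eqP; rewrite floor_eq => /andP[lex ltx].
  rewrite -ler_pdivlMr // lex /=.
  by move: ltx; rewrite ltr_pdivrMr // intrD mulrDl mul1r.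
move=> /andP[lex ltx]; apply/eqP; rewrite floor_eq ler_pdivlMr // lex /=.
by rewrite ltr_pdivrMr // intrD mulrDl mul1r.
Qed.

Lemma trivIset_grid_cell h : trivIset setT (grid_cell h).
Proof. by move=> k l _ _ [x [/= ek el]]; apply: int_of_nat_inj; rewrite -ek -el. Qed.

Lemma bigcup_grid_cell h : \bigcup_k grid_cell h k = setT.
Proof.
apply/seteqP; split => // x _.
by have [k hk] := int_of_nat_surj (Num.floor (x / h)); exists k.
Qed.

Lemma measurable_grid_cell h k : 0 < h -> measurable (grid_cell h k).
Proof. by move=> h0; rewrite grid_cellE. Qed.

Lemma grid_point_double h M : grid_point h M.*2 = M%:R * h.
Proof. by rewrite /grid_point /int_of_nat odd_double doubleK. Qed.

Lemma grid_point_doubleS h M : grid_point h M.*2.+1 = - (M.+1%:R * h).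
Proof. by rewrite /grid_point /int_of_nat /= odd_double /= uphalf_double mulNr. Qed.

(* The cells are enumerated as [0, h[, [-h, 0[, [h, 2h[, [-2h, -h[, ...,
   so the first 2M of them tile [-Mh, Mh[ and the increments telescope. *)
Lemma telescope_grid_point h (g : R -> R) M :
  \sum_(0 <= k < M.*2) (g (grid_point h k + h) - g (grid_point h k)) =
  g (M%:R * h) - g (- (M%:R * h)).
Proof.
elim: M => [|M IH]; first by rewrite big_geq // mul0r oppr0 subrr.
rewrite doubleS !big_nat_recr //= IH grid_point_double grid_point_doubleS.
have -> : M%:R * h + h = M.+1%:R * h by rewrite mulrSr mulrDl mul1r.
have -> : - (M.+1%:R * h) + h = - (M%:R * h) by rewrite mulrSr; ring.
ring.
Qed.

Lemma nneseries_grid_increment_le1 h (g : R -> R) : 0 < h ->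
  {homo g : x y / x <= y} -> (forall x, 0 <= g x <= 1) ->
  (\sum_(0 <= k <oo) (g (grid_point h k + h) - g (grid_point h k))%:E <= 1)%E.
Proof.
move=> h0 g_nd g01.
have incr_ge0 k : 0 <= g (grid_point h k + h) - g (grid_point h k).
  by rewrite subr_ge0 g_nd // lerDl ltW.
apply: lime_le; first by apply: is_cvg_nneseries => n _ _; rewrite lee_fin.
apply: nearW => m; rewrite sumEFin lee_fin.
apply: (@le_trans _ _ (\sum_(0 <= k < m.*2)
    (g (grid_point h k + h) - g (grid_point h k)))).
  rewrite [leRHS](big_cat_nat _ (n := m)) //=; last by lia.
  by rewrite lerDl sumr_ge0.
rewrite telescope_grid_point.
have := g01 (m%:R * h); have := g01 (- (m%:R * h)); lra.
Qed.

End Grid.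

Lemma nneseries_le_sandwich (R : realType) (X Y L v : nat -> \bar R) :
  (forall k, 0 <= L k)%E -> (forall k, 0 <= v k)%E ->
  (forall k, L k <= X k <= L k + v k)%E -> (forall k, L k <= Y k)%E ->
  (\sum_(0 <= k <oo) X k <= \sum_(0 <= k <oo) Y k + \sum_(0 <= k <oo) v k)%E.
Proof.
move=> L0 v0 LXv LY.
have X0 k : (0 <= X k)%E by have /andP[+ _] := LXv k; exact: le_trans.
apply: (@le_trans _ _ (\sum_(0 <= k <oo) (L k + v k))%E).
  by apply: lee_nneseries => // k _; have /andP[_ ->] := LXv k.
rewrite nneseriesD //; apply: leeD2r.
by apply: lee_nneseries.
Qed.

Section ProbabilityOfSqueezedEvent.
Context d (T : measurableType d) (R : realType) (P : probability T R).
Variables (X : {RV P >-> R}) (f g : R -> R) (M : R) (E : set T).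
Hypotheses (mE : measurable E) (mf : measurable_fun setT f).
Hypothesis f_density : forall B, measurable B ->
  P (X @^-1` B) = (\int[lebesgue_measure]_(x in B) (f x)%:E)%E.
Hypotheses (f_ge0 : forall x, 0 <= f x) (f_le : forall x, f x <= M).
Hypotheses (g_nd : {homo g : x y / x <= y}) (g01 : forall x, 0 <= g x <= 1).
Hypothesis squeeze : forall a b, a < b ->
  (P (X @^-1` `[a, b[%classic) * (g a)%:E <= P (E `&` X @^-1` `[a, b[%classic)
   <= P (X @^-1` `[a, b[%classic) * (g b)%:E)%E.

Let cell_lower h k :=
  (P (X @^-1` grid_cell h k) * (g (grid_point h k))%:E)%E.
Let cell_gap h k :=
  (P (X @^-1` grid_cell h k) * (g (grid_point h k + h) - g (grid_point h k))%:E)%E.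

Let fg_ge0 x : 0 <= f x * g x.
Proof. by rewrite mulr_ge0 //; case/andP: (g01 x). Qed.

Let mfg : measurable_fun setT (fun x => f x * g x).
Proof. by apply: measurable_funM => //; exact: nondecreasing_measurable. Qed.

Let g_incr_ge0 h k : 0 < h -> 0 <= g (grid_point h k + h) - g (grid_point h k).
Proof. by move=> h0; rewrite subr_ge0 g_nd // lerDl ltW. Qed.

Lemma prob_preimage_mul_EFin B c : measurable B -> 0 <= c ->
  (P (X @^-1` B) * c%:E = \int[lebesgue_measure]_(x in B) (f x * c)%:E)%E.
Proof.
move=> mB c0; rewrite f_density // -ge0_integralZr //.
  by apply/measurable_EFinP; exact: measurable_funTS.
by move=> x _; rewrite lee_fin.
Qed.

Lemma cell_lower_add_gap h k : 0 < h ->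
  (cell_lower h k + cell_gap h k =
   P (X @^-1` grid_cell h k) * (g (grid_point h k + h))%:E)%E.
Proof.
move=> h0; rewrite /cell_lower /cell_gap -ge0_muleDr ?lee_fin ?g_incr_ge0 //.
  by rewrite -EFinD addrC subrK.
by case/andP: (g01 (grid_point h k)).
Qed.

Lemma prob_grid_cell_le h k : 0 < h ->
  (P (X @^-1` grid_cell h k) <= (M * h)%:E)%E.
Proof.
move=> h0; have mcell := measurable_grid_cell k h0.
rewrite f_density //.
apply: (@le_trans _ _ (\int[lebesgue_measure]_(x in grid_cell h k) (cst M%:E x))%E).
  apply: ge0_le_integral => //.
  - by move=> x _; rewrite lee_fin.
  - by apply/measurable_EFinP; exact: measurable_funTS.
  - by move=> x _; rewrite lee_fin.
rewrite integral_cst // [X in (_ * X <= _)%E](_ : _ = h%:E) -?EFinM //.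
have := lebesgue_measure_itv `[grid_point h k, grid_point h k + h[.
by rewrite /= lte_fin ltrDl h0 -EFinD addrAC subrr add0r grid_cellE.
Qed.

Lemma prob_grid_cell_squeeze h k : 0 < h ->
  (cell_lower h k <= P (E `&` X @^-1` grid_cell h k)
   <= cell_lower h k + cell_gap h k)%E.
Proof.
move=> h0; rewrite cell_lower_add_gap // /cell_lower grid_cellE //.
by apply: squeeze; rewrite ltrDl.
Qed.

Lemma integral_grid_cell_squeeze h k : 0 < h ->
  (cell_lower h k <= \int[lebesgue_measure]_(x in grid_cell h k) (f x * g x)%:E
   <= cell_lower h k + cell_gap h k)%E.
Proof.
move=> h0; have mcell := measurable_grid_cell k h0.
have mfgD (c : R) : measurable_fun (grid_cell h k) (fun x => (f x * c)%:E).
  by apply/measurable_EFinP; apply: measurable_funTS; exact: measurable_funM.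
have mfgE : measurable_fun (grid_cell h k) (fun x => (f x * g x)%:E).
  by apply/measurable_EFinP; exact: measurable_funTS.
have g_ge0 x : 0 <= g x by case/andP: (g01 x).
rewrite cell_lower_add_gap // /cell_lower !prob_preimage_mul_EFin //.
have cell_itv x : grid_cell h k x -> grid_point h k <= x < grid_point h k + h.
  by rewrite grid_cellE //= in_itv.
apply/andP; split; apply: ge0_le_integral => //.
- by move=> x _; rewrite lee_fin mulr_ge0.
- exact: mfgD.
- by move=> x /cell_itv /andP[lex _]; rewrite lee_fin ler_wpM2l // g_nd.
- by move=> x _; rewrite lee_fin.
- exact: mfgD.
- by move=> x /cell_itv /andP[_ ltx]; rewrite lee_fin ler_wpM2l // g_nd // ltW.
Qed.

Lemma nneseries_cell_gap_le h : 0 < h ->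
  (\sum_(0 <= k <oo) cell_gap h k <= (M * h)%:E)%E.
Proof.
move=> h0; have M0 : 0 <= M := le_trans (f_ge0 0) (f_le 0).
apply: (@le_trans _ _ (\sum_(0 <= k <oo)
    ((M * h)%:E * (g (grid_point h k + h) - g (grid_point h k))%:E))%E).
  apply: lee_nneseries => k _; first by rewrite mule_ge0 ?lee_fin ?g_incr_ge0.
  by rewrite lee_wpmul2r ?lee_fin ?g_incr_ge0 ?prob_grid_cell_le.
rewrite nneseriesZl; last by move=> k _; rewrite lee_fin g_incr_ge0.
rewrite -[leRHS]mule1 lee_wpmul2l ?lee_fin ?(mulr_ge0 M0 (ltW h0)) //.
exact: nneseries_grid_increment_le1.
Qed.

Lemma prob_eq_nneseries_grid_cell h : 0 < h ->
  P E = (\sum_(0 <= k <oo) P (E `&` X @^-1` grid_cell h k))%E.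
Proof.
move=> h0.
have EU : \bigcup_k (E `&` X @^-1` grid_cell h k) = E.
  by rewrite -setI_bigcupr -preimage_bigcup bigcup_grid_cell preimage_setT setIT.
rewrite -[in LHS]EU measure_semi_bigcup ?EU //.
- move=> k; apply: measurableI => //.
  exact: measurable_funPTI (measurable_grid_cell k h0).
- move=> k l _ _ [w [[_ wk] [_ wl]]].
  by apply: (@trivIset_grid_cell R h k l) => //; exists (X w).
Qed.

Lemma integral_eq_nneseries_grid_cell h : 0 < h ->
  (\int[lebesgue_measure]_x (f x * g x)%:E = \sum_(0 <= k <oo)
     \int[lebesgue_measure]_(x in grid_cell h k) (f x * g x)%:E)%E.
Proof.
move=> h0; rewrite -ge0_integral_bigcup ?bigcup_grid_cell //.
- by move=> k; exact: measurable_grid_cell.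
- by apply/measurable_EFinP; exact: mfg.
- by move=> x _; rewrite lee_fin.
- exact: trivIset_grid_cell.
Qed.

Lemma prob_integral_close h : 0 < h ->
  (P E <= \int[lebesgue_measure]_x (f x * g x)%:E + (M * h)%:E)%E /\
  (\int[lebesgue_measure]_x (f x * g x)%:E <= P E + (M * h)%:E)%E.
Proof.
move=> h0.
have L0 k : (0 <= cell_lower h k)%E.
  by rewrite mule_ge0 ?lee_fin //; case/andP: (g01 (grid_point h k)).
have v0 k : (0 <= cell_gap h k)%E by rewrite mule_ge0 ?lee_fin ?g_incr_ge0.
rewrite (prob_eq_nneseries_grid_cell h0) (integral_eq_nneseries_grid_cell h0).
have gap_le := leeD2l _ (nneseries_cell_gap_le h0).
split; apply: le_trans (nneseries_le_sandwich L0 v0 _ _) (gap_le _) => k.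
- exact: prob_grid_cell_squeeze.
- by case/andP: (integral_grid_cell_squeeze k h0).
- exact: integral_grid_cell_squeeze.
- by case/andP: (prob_grid_cell_squeeze k h0).
Qed.

Theorem prob_eq_integral_density_mul :
  P E = (\int[lebesgue_measure]_x (f x * g x)%:E)%E.
Proof.
have M0 : 0 <= M := le_trans (f_ge0 0) (f_le 0).
have h_gt0 e : 0 < e -> 0 < e / (M + 1) by move=> e0; rewrite divr_gt0 ?ltr_wpDl.
have gap_le e : 0 < e -> M * (e / (M + 1)) <= e.
  move=> e0; rewrite mulrA ler_pdivrMr ?ltr_wpDl //; nra.
apply/eqP; rewrite eq_le; apply/andP; split; apply/lee_addgt0Pr => e e0;
  have [PI IP] := prob_integral_close (h_gt0 e e0).
- by apply: (le_trans PI); apply: leeD2l; rewrite lee_fin gap_le.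
- by apply: (le_trans IP); apply: leeD2l; rewrite lee_fin gap_le.
Qed.

End ProbabilityOfSqueezedEvent.

Lemma normal_pdf0N (R : realType) (s x : R) : s != 0 ->
  normal_pdf 0 s (- x) = normal_pdf 0 s x.
Proof.
by move=> s_neq0; rewrite /normal_pdf (negbTE s_neq0) /normal_fun !subr0 sqrrN.
Qed.

Lemma gauss_law0_prob_geN d (T : measurableType d) (R : realType)
    (P : probability T R) (C : {RV P >-> R}) (v : R) : 0 <= v ->
  (forall B, measurable B -> distribution P C B = gauss_law 0 v B) ->
  forall t, P (C @^-1` `[- t, +oo[%classic) = cdf C t.
Proof.
move=> v_ge0 C_law t; rewrite /cdf -[LHS]/(distribution P C _) !C_law //.
rewrite /gauss_law; have [_|v_neq0] := eqVneq v 0.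
  rewrite !diracE; congr ((_ : bool)%:R%:E).
  apply/idP/idP => /set_mem /=; rewrite !in_itv /= => ?;
    by apply/mem_set; rewrite /= in_itv /=; lra.
have s_neq0 : Num.sqrt v != 0 by rewrite sqrtr_eq0 -ltNge lt_neqAle eq_sym v_neq0.
rewrite /normal_prob -[in RHS](opprK t) ge0_integration_by_substitutionNy.
- by apply: eq_integral => x _; rewrite /= normal_pdf0N.
- exact/continuous_subspaceT/continuous_normal_pdf.
- by move=> x _; exact: normal_pdf_ge0.
Qed.

Section CdfProduct.
Context d (T : measurableType d) (R : realType) (P : probability T R).
Implicit Type X : {RV P >-> R}.

Lemma EFin_fine_cdf X x : (fine (cdf X x))%:E = cdf X x.
Proof. by rewrite fineK // fin_num_measure. Qed.

Lemma fine_cdf_ge0_le1 X x : 0 <= fine (cdf X x) <= 1.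
Proof. by rewrite -!lee_fin EFin_fine_cdf cdf_ge0 cdf_le1. Qed.

Lemma nondecreasing_fine_cdf X : {homo (fun x => fine (cdf X x)) : x y / x <= y}.
Proof. by move=> x y xy; rewrite -lee_fin !EFin_fine_cdf cdf_nondecreasing. Qed.

Lemma prod_fine_cdf_ge0_le1 (I : finType) (p : pred I) (Y : I -> {RV P >-> R}) x :
  0 <= \prod_(j | p j) fine (cdf (Y j) x) <= 1.
Proof.
apply/andP; split.
  by apply: prodr_ge0 => j _; case/andP: (fine_cdf_ge0_le1 (Y j) x).
by apply: prodr_ile1 => j _; exact: fine_cdf_ge0_le1.
Qed.

Lemma nondecreasing_prod_fine_cdf (I : finType) (p : pred I) (Y : I -> {RV P >-> R}) :
  {homo (fun x => \prod_(j | p j) fine (cdf (Y j) x)) : x y / x <= y}.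
Proof.
move=> x y xy; apply: ler_prod => j _.
by case/andP: (fine_cdf_ge0_le1 (Y j) x) => -> _; exact: nondecreasing_fine_cdf.
Qed.

End CdfProduct.

Lemma bigmax0_addl_eq_iff (R : realDomainType) n (c : R) (a : 'I_n -> R) i :
  \big[Num.max/0]_(j < n) (c + a j) = c + a i <->
  - c <= a i /\ (forall j, a j <= a i).
Proof.
split=> [max_eq|[ca a_le]].
  split; last first.
    by move=> j; have := le_bigmax 0 (fun j => c + a j) j; rewrite max_eq lerD2l.
  have : 0 <= \big[Num.max/0]_(j < n) (c + a j) by apply/bigmax_geP; left.
  by rewrite max_eq -lerBlDl sub0r.
apply/eqP; rewrite eq_le (le_bigmax 0 (fun j => c + a j) i) andbT.
apply/bigmax_leP; split; first by rewrite -lerBlDl sub0r.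
by move=> j _; rewrite lerD2l.
Qed.

Section IndependentShiftedFamily.
Context d (T : measurableType d) (R : realType) (P : probability T R) (N : nat).
Variables (C : {RV P >-> R}) (A : 'I_N -> {RV P >-> R}).
Hypothesis CA_indep : mutually_independent (CA_family C A).

Definition CA_box i (B0 B : set R) (Bj : 'I_N -> set R) : set T :=
  [set w | B0 (C w) /\ B (A i w) /\ forall j, j != i -> Bj j (A j w)].

Section Box.
Variables (i : 'I_N) (B0 B : set R) (Bj : 'I_N -> set R).
Hypotheses (mB0 : measurable B0) (mB : measurable B) (mBj : forall j, measurable (Bj j)).

Let box_side o := match o with None => B0 | Some j => if j == i then B else Bj j end.

Let measurable_box_side o : measurable (box_side o).
Proof. by case: o => [j|] //=; case: eqP. Qed.

Let CA_boxE : CA_box i B0 B Bj =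
  \bigcap_(o in [set` [set: option 'I_N]%SET]) (CA_family C A o @^-1` box_side o).
Proof.
apply/seteqP; split => [w [B0w [Bw Bjw]] [j|] _ //=|w Bw].
  by case: eqP => [->|/eqP /Bjw].
split; first exact: (Bw None (finset.in_setT _)).
split; first by have := Bw (Some i) (finset.in_setT _); rewrite /= eqxx.
by move=> j ji; have := Bw (Some j) (finset.in_setT _); rewrite /= (negbTE ji).
Qed.

Lemma measurable_CA_box : measurable (CA_box i B0 B Bj).
Proof.
rewrite CA_boxE; apply: fin_bigcap_measurable; first exact: finite_finpred.
by move=> o _; exact: measurable_funPTI.
Qed.

Lemma prob_CA_box : P (CA_box i B0 B Bj) =
  (P (C @^-1` B0) * P (A i @^-1` B) * \prod_(j < N | j != i) P (A j @^-1` Bj j))%E.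
Proof.
rewrite CA_boxE CA_indep // (eq_bigl predT) => [|o]; last by rewrite finset.in_setT.
rewrite (bigD1 None) //= (reindex_omap Some id) => [|[]//].
rewrite /= (eq_bigl predT) => [|j]; last by rewrite eqxx.
rewrite (bigD1 i) //= eqxx muleA; congr (_ * _)%E.
by apply: eq_bigr => j ji; rewrite (negbTE ji).
Qed.

End Box.

Definition argmax_event i : set T :=
  [set w | - C w <= A i w /\ forall j, A j w <= A i w].

Lemma argmax_eventE i :
  [set w | \big[Num.max/0]_(j < N) (C w + A j w) = C w + A i w] = argmax_event i.
Proof. by apply/seteqP; split => w /bigmax0_addl_eq_iff. Qed.

Lemma measurable_argmax_event i : measurable (argmax_event i).
Proof.
have mle (f g : T -> R) : measurable_fun setT f -> measurable_fun setT g ->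
    measurable [set w | f w <= g w].
  by move=> mf mg; rewrite -[X in measurable X]setTI; exact: measurable_fun_ler.
have -> : argmax_event i = [set w | - C w <= A i w] `&`
    \bigcap_(j in [set` [set: 'I_N]%SET]) [set w | A j w <= A i w].
  apply/seteqP; split => [w [Cw Aw]|w [Cw Aw]]; split => // j.
  - by move=> _; exact: Aw.
  - exact: (Aw j (finset.in_setT j)).
apply: measurableI; first by apply: mle => //; exact: measurable_funN.
apply: fin_bigcap_measurable; first exact: finite_finpred.
by move=> j _; exact: mle.
Qed.

Definition cdf_prod i x : R :=
  fine (cdf C x) * \prod_(j < N | j != i) fine (cdf (A j) x).

Lemma EFin_cdf_prod i x :
  (cdf_prod i x)%:E = (cdf C x * \prod_(j < N | j != i) cdf (A j) x)%E.
Proof.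
rewrite EFinM -prodEFin EFin_fine_cdf.
by under eq_bigr do rewrite EFin_fine_cdf.
Qed.

Lemma cdf_prod_ge0_le1 i x : 0 <= cdf_prod i x <= 1.
Proof.
have /andP[C0 C1] := fine_cdf_ge0_le1 C x.
have /andP[A0 A1] := prod_fine_cdf_ge0_le1 (fun j => j != i) A x.
by rewrite mulr_ge0 //= mulr_ile1.
Qed.

Lemma nondecreasing_cdf_prod i : {homo cdf_prod i : x y / x <= y}.
Proof.
move=> x y xy; apply: ler_pM.
- by case/andP: (fine_cdf_ge0_le1 C x).
- by case/andP: (prod_fine_cdf_ge0_le1 (fun j => j != i) A x).
- exact: nondecreasing_fine_cdf.
- exact: (nondecreasing_prod_fine_cdf (fun j => j != i) A).
Qed.

Lemma prob_argmax_event_squeeze i a b :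
  (forall t, P (C @^-1` `[- t, +oo[%classic) = cdf C t) -> a < b ->
  (P (A i @^-1` `[a, b[%classic) * (cdf_prod i a)%:E
     <= P (argmax_event i `&` A i @^-1` `[a, b[%classic)
     <= P (A i @^-1` `[a, b[%classic) * (cdf_prod i b)%:E)%E.
Proof.
move=> C_sym ab.
pose box t := CA_box i `[- t, +oo[%classic `[a, b[%classic (fun=> `]-oo, t]%classic).
have mbox t : measurable (box t) by exact: measurable_CA_box.
have mevent : measurable (argmax_event i `&` A i @^-1` `[a, b[%classic).
  by apply: measurableI; [exact: measurable_argmax_event | exact: measurable_funPTI].
have box_prob t : P (box t) = (P (A i @^-1` `[a, b[%classic) * (cdf_prod i t)%:E)%E.
  by rewrite prob_CA_box // EFin_cdf_prod -C_sym muleCA muleA.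
rewrite -!box_prob; apply/andP; split; apply: le_measure; rewrite ?inE //.
  move=> w [/= + [/[dup] Aw + Aj]]; rewrite !in_itv /= andbT => Cw /andP[aA _].
  split=> //; split; first lra.
  move=> j; have [->//|ji] := eqVneq j i.
  by have := Aj j ji; rewrite /= in_itv /= => /le_trans; apply.
move=> w [[Cw Aj] /[dup] Aw /=]; rewrite in_itv /= => /andP[_ Ab].
split; first by rewrite /= in_itv /= andbT; lra.
split=> // j _; rewrite /= in_itv /=; exact: le_trans (Aj j) (ltW Ab).
Qed.

End IndependentShiftedFamily.

Lemma sigma_min2_ge0 (R : realType) N (hN : (0 < N)%N) (sigma : 'I_N -> R) :
  0 <= sigma_min2 hN sigma.
Proof. by apply: le_bigmin => [|j _]; exact: sqr_ge0. Qed.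

Lemma sigma_min2_le (R : realType) N (hN : (0 < N)%N) (sigma : 'I_N -> R) i :
  sigma_min2 hN sigma <= sigma i ^+ 2.
Proof. exact: bigmin_le. Qed.

Lemma residual_variance_gt0 (R : realType) N (hN : (0 < N)%N) (sigma : 'I_N -> R)
    (gamma : R) i : 0 < sigma i -> 0 <= gamma < 1 ->
  0 < sigma i ^+ 2 - sigma_min2 hN sigma * `|gamma|.
Proof.
move=> sigma_gt0 /andP[gamma_ge0 gamma_lt1]; rewrite ger0_norm //.
have := sigma_min2_ge0 hN sigma; have := sigma_min2_le hN sigma i.
have : 0 < sigma i ^+ 2 by rewrite exprn_gt0.
nra.
Qed.

Theorem lemma6 (R : realType) (d : measure_display) (T : measurableType d)
    (P : probability T R) (N : nat) (hN : (0 < N)%N)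
    (mu sigma : 'I_N -> R) (gamma : R)
    (C : {RV P >-> R}) (A : 'I_N -> {RV P >-> R}) :
  (forall i, 0 < sigma i) ->
  0 <= gamma < 1 ->
  mutually_independent (CA_family C A) ->
  (forall B, measurable B ->
     distribution P C B = gauss_law 0 (sigma_min2 hN sigma * `|gamma|) B) ->
  (forall i B, measurable B ->
     distribution P (A i) B =
       gauss_law (mu i) (sigma i ^+ 2 - sigma_min2 hN sigma * `|gamma|) B) ->
  forall i : 'I_N,
    P [set w | \big[Num.max/0]_(j < N) (C w + A j w) = C w + A i w] =
    (\int[lebesgue_measure]_x
       ((normal_pdf (mu i) (Num.sqrt (sigma i ^+ 2 - sigma_min2 hN sigma * `|gamma|)) x)%:E
        * cdf C x
        * \prod_(j < N | j != i) cdf (A j) x))%E.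
Proof.
move=> sigma_gt0 gamma01 CA_indep C_law A_law i.
have v_gt0 := residual_variance_gt0 hN (sigma_gt0 i) gamma01.
have s_neq0 : Num.sqrt (sigma i ^+ 2 - sigma_min2 hN sigma * `|gamma|) != 0.
  by rewrite sqrtr_eq0 -ltNge.
have C_var_ge0 := mulr_ge0 (sigma_min2_ge0 hN sigma) (normr_ge0 gamma).
have C_sym := gauss_law0_prob_geN C_var_ge0 C_law.
under eq_integral do rewrite -muleA -EFin_cdf_prod -EFinM.
rewrite argmax_eventE; apply: (prob_eq_integral_density_mul (X := A i)).
- exact: measurable_argmax_event.
- exact: measurable_normal_pdf.
- by move=> B mB; rewrite -[LHS]/(distribution P (A i) B) A_law // /gauss_law gt_eqF.
- exact: normal_pdf_ge0.
- by move=> x; exact: normal_pdf_ub.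
- exact: nondecreasing_cdf_prod.
- exact: cdf_prod_ge0_le1.
- by move=> a b; exact: prob_argmax_event_squeeze.
Qed.
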